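(* Let $f,g_1,\dots,g_m:\mathbb{R}^n\to\mathbb{R}$ be twice continuously differentiable convex functions on $\mathbb{R}^n_+$, $g=\mathrm{col}(g_1,\dots,g_m)$, $\bar n=n+m$, $\phi(x,y)=\mathrm{col}\big(\nabla f(x)+\sum_{i=1}^m y_i\nabla g_i(x),\ -g(x)\big)$ on $\mathbb{R}^{\bar n}_+$, and define $\psi:\mathbb{R}^{\bar n+1}_{++}\to\mathbb{R}^{\bar n+1}$ by $\psi(\bar x,\tau)=\mathrm{col}\big(\tau\phi(\bar x/\tau),\ -\bar x^\top\phi(\bar x/\tau)\big)$. Then the Jacobian $\nabla\psi(\hat x)$ is positive semidefinite (i.e. $d^\top\nabla\psi(\hat x)d\ge0$ for all $d$) for every $\hat x\in\mathbb{R}^{\bar n+1}_{++}$. Furthermore, $\psi$ is a continuous monotone mapping on $\mathbb{R}^{\bar n+1}_{++}$, i.e. $(\hat x^1-\hat x^2)^\top(\psi(\hat x^1)-\psi(\hat x^2))\ge0$ for all $\hat x^1,\hat x^2\in\mathbb{R}^{\bar n+1}_{++}$.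
   Context: $\mathbb{R}^{p}_{++}$ denotes the set of vectors with all components strictly positive. *)

From HB Require Import structures.
From mathcomp Require Import all_boot all_order all_algebra.
From mathcomp Require Import all_classical all_reals all_analysis.
Set Implicit Arguments. Unset Strict Implicit. Unset Printing Implicit Defensive.
Import Order.TTheory GRing.Theory Num.Theory.
Import numFieldNormedType.Exports.
Local Open Scope ring_scope.

Section Defs.
Variable R : realType.

Definition partial (n : nat) (i : 'I_n) (f : 'rV[R]_n -> R) (x : 'rV[R]_n) : R :=
  derive f x (delta_mx 0 i).

Definition grad (n : nat) (f : 'rV[R]_n -> R) (x : 'rV[R]_n) : 'rV[R]_n :=
  \row_i partial i f x.

Definition C2 (n : nat) (f : 'rV[R]_n -> R) : Prop :=
  (forall x, differentiable f x) /\
  (forall i x, differentiable (partial i f) x) /\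
  (forall i j, continuous (partial j (partial i f))).

Definition nonneg_orthant (k : nat) (x : 'rV[R]_k) : Prop := forall i, 0 <= x 0 i.
Definition pos_orthant (k : nat) (x : 'rV[R]_k) : Prop := forall i, 0 < x 0 i.

Definition convex_on_nonneg (n : nat) (f : 'rV[R]_n -> R) : Prop :=
  forall x y (t : R), nonneg_orthant x -> nonneg_orthant y -> 0 <= t -> t <= 1 ->
    f (t *: x + (1 - t) *: y) <= t * f x + (1 - t) * f y.

Definition phi (n m : nat) (f : 'rV[R]_n -> R) (g : 'I_m -> 'rV[R]_n -> R)
    (z : 'rV[R]_(n + m)) : 'rV[R]_(n + m) :=
  let x := lsubmx z in let y := rsubmx z in
  row_mx (grad f x + \sum_(i < m) y 0 i *: grad (g i) x) (- \row_i g i x).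

Definition psi (n m : nat) (f : 'rV[R]_n -> R) (g : 'I_m -> 'rV[R]_n -> R)
    (xh : 'rV[R]_(n + m + 1)) : 'rV[R]_(n + m + 1) :=
  let xb := lsubmx xh in let tau := rsubmx xh 0 0 in
  let p := phi f g (tau^-1 *: xb) in
  row_mx (tau *: p) (\row_(j < 1) - \sum_(i < n + m) xb 0 i * p 0 i).

Definition dotv (k : nat) (u v : 'rV[R]_k) : R := \sum_(i < k) u 0 i * v 0 i.

End Defs.

(* The map phi is the saddle-point operator (grad_x L, - grad_y L) of the
   Lagrangian L(x, y) = f x + sum_i y_i g_i x, convex in x and linear in y: the
   gradient inequality for f and for each g_i makes it monotone on the
   nonnegative orthant.  The map psi is the homogenization of phi; writing t_j
   for the last coordinate of xh_j and u_j = xbar_j / t_j, one has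
     (xh_1 - xh_2)^T (psi xh_1 - psi xh_2) = t_1 t_2 (u_1 - u_2)^T (phi u_1 - phi u_2),
   so psi is monotone on the open positive orthant.  Finally, a map that is
   monotone near a point where it is differentiable has a positive semidefinite
   Jacobian there: d^T J d is the limit as h -> 0+ of
   (h d)^T (psi (x + h d) - psi x) / h^2 >= 0. *)

From HB Require Import structures.
From mathcomp Require Import all_boot all_order all_algebra.
From mathcomp Require Import all_classical all_reals all_analysis.
From mathcomp Require Import ring lra.
Import Order.TTheory GRing.Theory Num.Theory.
Import numFieldNormedType.Exports.
Set Implicit Arguments. Unset Strict Implicit. Unset Printing Implicit Defensive.
Local Open Scope classical_set_scope.
Local Open Scope ring_scope.

Section DotProduct.
Variable R : realType.

Lemma dotv_is_bilinear k : bilinear_for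
  (GRing.Scale.Law.clone _ _ *%R _) (GRing.Scale.Law.clone _ _ *%R _) (@dotv R k).
Proof.
split=> [v|u] a x y /=; rewrite /dotv mulr_sumr -big_split.
  by apply: eq_bigr => i _; rewrite !mxE mulrDl mulrA.
by apply: eq_bigr => i _; rewrite !mxE mulrDr mulrCA.
Qed.

HB.instance Definition _ k := bilinear_isBilinear.Build R
  'rV[R]_k 'rV[R]_k R _ _ (@dotv R k) (dotv_is_bilinear k).

Lemma dotvC k (u v : 'rV[R]_k) : dotv u v = dotv v u.
Proof. by apply: eq_bigr => i _; rewrite mulrC. Qed.

Lemma dotvZl k a (u v : 'rV[R]_k) : dotv (a *: u) v = a * dotv u v.
Proof. exact: linearZl_LR. Qed.

Lemma dotvZr k a (u v : 'rV[R]_k) : dotv u (a *: v) = a * dotv u v.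
Proof. exact: linearZr_LR. Qed.

Lemma dotv_split p q (u v : 'rV[R]_(p + q)) :
  dotv u v = dotv (lsubmx u) (lsubmx v) + dotv (rsubmx u) (rsubmx v).
Proof.
by rewrite /dotv big_split_ord; congr (_ + _); apply: eq_bigr => i _; rewrite !mxE.
Qed.

Lemma dotv_rV1 (a b : 'rV[R]_1) : dotv a b = a 0 0 * b 0 0.
Proof. by rewrite /dotv big_ord1. Qed.

End DotProduct.

Section DifferentiableRow.
Variables (R : realType) (V : normedModType R).

Lemma differentiable_fun_sum (W : normedModType R) p (F : 'I_p -> V -> W) x :
  (forall i, differentiable (F i) x) ->
  differentiable (fun y => \sum_(i < p) F i y) x.
Proof. by move=> dF; rewrite -fct_sumE; apply: differentiable_sum. Qed.

Lemma differentiable_row p (F : V -> 'rV[R]_p) x :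
  (forall j, differentiable (fun y => F y 0 j) x) -> differentiable F x.
Proof.
move=> dF; rewrite (_ : F = fun y => \sum_(j < p) F y 0 j *: delta_mx 0 j).
  by apply: differentiable_fun_sum => j; apply: differentiableZl.
by apply/funext => y; rewrite -row_sum_delta.
Qed.

Lemma differentiable_row_coord p (F : V -> 'rV[R]_p) x j :
  differentiable F x -> differentiable (fun y => F y 0 j) x.
Proof. by move=> dF; exact: (differentiable_comp dF (differentiable_coord _ 0 j)). Qed.

Lemma differentiable_rowZ p (k : V -> R) (F : V -> 'rV[R]_p) x :
  differentiable k x -> differentiable F x ->
  differentiable (fun y => k y *: F y) x.
Proof.
move=> dk dF; apply: differentiable_row => j.
under eq_fun do rewrite mxE.
exact: differentiableM dk (differentiable_row_coord j dF).
Qed.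

Lemma differentiable_row_mx p q (A : V -> 'rV[R]_p) (B : V -> 'rV[R]_q) x :
  differentiable A x -> differentiable B x ->
  differentiable (fun y => row_mx (A y) (B y)) x.
Proof.
move=> dA dB; apply: differentiable_row => j.
rewrite -(fintype.splitK j); case: (fintype.split j) => j' /=.
  under eq_fun do rewrite row_mxEl; exact: differentiable_row_coord.
under eq_fun do rewrite row_mxEr; exact: differentiable_row_coord.
Qed.

Lemma differentiable_dotv k (u v : V -> 'rV[R]_k) x :
  differentiable u x -> differentiable v x ->
  differentiable (fun y => dotv (u y) (v y)) x.
Proof.
move=> du dv; apply: differentiable_fun_sum => i.
exact: differentiableM (differentiable_row_coord i du) (differentiable_row_coord i dv).
Qed.

End DifferentiableRow.

Section MonotoneMaps.
Variable R : realType.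

Definition monotone_on k (P : 'rV[R]_k -> Prop) (F : 'rV[R]_k -> 'rV[R]_k) :=
  forall x y, P x -> P y -> 0 <= dotv (x - y) (F x - F y).

Lemma pos_orthant_nbhs k (x : 'rV[R]_k) :
  pos_orthant x -> \forall y \near x, pos_orthant y.
Proof.
move=> px.
have coord_gt0 (i : 'I_k) : \forall y \near x, 0 < (y : 'rV[R]_k) 0 i.
  exact: cvgr_gt (@coord_continuous _ 1 k 0 i x) _ (px i).
exact: filter_forall coord_gt0.
Qed.

Lemma cvg_ray_at_right k (x d : 'rV[R]_k) :
  (fun h : R => h *: d + x) @ 0^'+ --> x.
Proof.
apply: cvg_at_right_filter; rewrite -[x in _ --> x]add0r.
apply: cvgD; last exact: cvg_cst.
rewrite -(scale0r d); apply: cvgZ; [exact: cvg_id | exact: cvg_cst].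
Qed.

Lemma monotone_jacobian_psd k (P : 'rV[R]_k -> Prop) (F : 'rV[R]_k -> 'rV[R]_k)
    x (d : 'rV[R]_k) :
  monotone_on P F -> (\forall y \near x, P y) -> differentiable F x ->
  0 <= (d *m 'J F x *m d^T) 0 0.
Proof.
move=> monoF Px dF.
rewrite -deriveEjacobian // (_ : _ 0 0 = dotv ('D_d F x) d); last first.
  by rewrite mxE; apply: eq_bigr => j _; rewrite mxE.
have quot := cvg_dnbhs_at_right (diff_derivable (v := d) dF).
have dot_d : continuous (fun w : 'rV[R]_k => dotv w d).
  by move=> w; apply/differentiable_continuous/differentiable_dotv;
    [by [] | exact: differentiable_cst].
apply: (cvgr_to_ge (continuous_cvg _ (dot_d _) quot)).
have Pray : \forall h \near 0^'+, P (h *: d + x) by exact: cvg_ray_at_right Px.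
near=> h.
have h0 : 0 < h by near: h; exact: nbhs_right_gt.
have Ph : P (h *: d + x) by near: h.
have := monoF _ _ Ph (nbhs_singleton Px).
rewrite addrK dotvC dotvZr => mono_h.
rewrite /= dotvZl; apply: mulr_ge0; first by rewrite invr_ge0 ltW.
by rewrite -(pmulr_rge0 _ h0).
Unshelve. all: by end_near.
Qed.

End MonotoneMaps.

Section Homogenization.
Variables (R : realType) (k : nat).
Implicit Types (F : 'rV[R]_k -> 'rV[R]_k) (xh : 'rV[R]_(k + 1)).

Definition hom_scale xh : R := rsubmx xh 0 0.

Definition dehomogenize xh : 'rV[R]_k := (hom_scale xh)^-1 *: lsubmx xh.

Definition homogenize F xh : 'rV[R]_(k + 1) :=
  row_mx (hom_scale xh *: F (dehomogenize xh))
         (\row_(j < 1) - dotv (lsubmx xh) (F (dehomogenize xh))).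

Lemma hom_scale_gt0 xh : pos_orthant xh -> 0 < hom_scale xh.
Proof. by move=> px; rewrite /hom_scale mxE. Qed.

Lemma lsubmx_dehomogenize xh :
  hom_scale xh != 0 -> lsubmx xh = hom_scale xh *: dehomogenize xh.
Proof. by move=> t0; rewrite /dehomogenize scalerA mulfV ?scale1r. Qed.

Lemma dehomogenize_nonneg xh : pos_orthant xh -> nonneg_orthant (dehomogenize xh).
Proof.
move=> px i; rewrite /dehomogenize !mxE.
by rewrite mulr_ge0 ?invr_ge0 ?ltW ?hom_scale_gt0.
Qed.

Lemma dotv_homogenize_identity (t1 t2 : R) (u1 u2 p1 p2 : 'rV[R]_k) :
  dotv (t1 *: u1 - t2 *: u2) (t1 *: p1 - t2 *: p2) +
  (t1 - t2) * (- dotv (t1 *: u1) p1 + dotv (t2 *: u2) p2) =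
  t1 * t2 * dotv (u1 - u2) (p1 - p2).
Proof. by rewrite !(linearBl, linearBr) /= !(dotvZl, dotvZr); ring. Qed.

Lemma dotv_homogenizeB F x1 x2 :
  hom_scale x1 != 0 -> hom_scale x2 != 0 ->
  dotv (x1 - x2) (homogenize F x1 - homogenize F x2) =
  hom_scale x1 * hom_scale x2 *
  dotv (dehomogenize x1 - dehomogenize x2)
       (F (dehomogenize x1) - F (dehomogenize x2)).
Proof.
move=> t1 t2; rewrite -dotv_homogenize_identity.
rewrite dotv_split !linearB /= /homogenize !(row_mxKl, row_mxKr) dotv_rV1.
have -> : (rsubmx x1 - rsubmx x2) 0 0 = hom_scale x1 - hom_scale x2.
  by rewrite [LHS]mxE [X in _ + X]mxE.
by rewrite !mxE -!lsubmx_dehomogenize // opprK.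
Qed.

Lemma homogenize_monotone F :
  monotone_on (@nonneg_orthant R k) F ->
  monotone_on (@pos_orthant R (k + 1)) (homogenize F).
Proof.
move=> monoF x1 x2 p1 p2.
have t1 := hom_scale_gt0 p1; have t2 := hom_scale_gt0 p2.
rewrite dotv_homogenizeB ?gt_eqF //.
apply: mulr_ge0; first by rewrite mulr_ge0 // ltW.
exact: monoF (dehomogenize_nonneg p1) (dehomogenize_nonneg p2).
Qed.

Lemma homogenize_differentiable F xh :
  hom_scale xh != 0 -> differentiable F (dehomogenize xh) ->
  differentiable (homogenize F) xh.
Proof.
move=> t0 dF.
have dl := @differentiable_lsubmx R 1 k 1 xh.
have dt : differentiable hom_scale xh.
  exact: differentiable_row_coord 0 (@differentiable_rsubmx R 1 k 1 xh).
have du : differentiable dehomogenize xh.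
  apply: differentiable_row => i; under eq_fun do rewrite mxE.
  exact: differentiableM (differentiableV dt t0) (differentiable_row_coord i dl).
have dFu : differentiable (fun y => F (dehomogenize y)) xh.
  exact: differentiable_comp du dF.
apply: differentiable_row_mx; first exact: differentiable_rowZ.
apply: differentiable_row => j; under eq_fun do rewrite mxE.
exact/differentiableN/differentiable_dotv.
Qed.

End Homogenization.

Section ConvexGradient.
Variables (R : realType) (n : nat).
Implicit Types (h : 'rV[R]_n -> R) (x y : 'rV[R]_n).

Lemma dotv_grad h x v : differentiable h x -> dotv v (grad h x) = 'D_v h x.
Proof.
move=> dh; rewrite (deriveE _ dh) {2}(row_sum_delta v) linear_sum.
by apply: eq_bigr => j _; rewrite linearZ /= -deriveE // mxE.
Qed.

Lemma convex_derive_le h x y :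
  convex_on_nonneg h -> nonneg_orthant x -> nonneg_orthant y ->
  derivable h x (y - x) -> 'D_(y - x) h x <= h y - h x.
Proof.
move=> cvx nx ny dh; apply: (cvgr_to_le (cvg_dnbhs_at_right dh)).
near=> t.
have t0 : 0 < t by near: t; exact: nbhs_right_gt.
have t1 : t <= 1 by near: t; exact: nbhs_right_le.
have chord := cvx y x t ny nx (ltW t0) t1.
rewrite /= (_ : t *: (y - x) + x = t *: y + (1 - t) *: x); last first.
  by rewrite scalerBr scalerBl scale1r [x - _]addrC addrA.
rewrite -[X in X <= _]/(t^-1 * _) ler_pdivrMl //; lra.
Unshelve. all: by end_near.
Qed.

Lemma convex_grad_le h x y :
  convex_on_nonneg h -> nonneg_orthant x -> nonneg_orthant y ->
  differentiable h x -> dotv (y - x) (grad h x) <= h y - h x.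
Proof.
move=> cvx nx ny dh; rewrite dotv_grad //.
exact: convex_derive_le cvx nx ny (diff_derivable (v := y - x) dh).
Qed.

Lemma convex_scaled_grad_monotone h x1 x2 (a1 a2 : R) :
  convex_on_nonneg h -> nonneg_orthant x1 -> nonneg_orthant x2 ->
  differentiable h x1 -> differentiable h x2 -> 0 <= a1 -> 0 <= a2 ->
  0 <= dotv (x1 - x2) (a1 *: grad h x1 - a2 *: grad h x2) +
       (a1 - a2) * (h x2 - h x1).
Proof.
move=> cvx n1 n2 d1 d2 a1_ge0 a2_ge0.
have le1 := convex_grad_le cvx n1 n2 d1.
have le2 := convex_grad_le cvx n2 n1 d2.
rewrite -opprB linearNl /= in le1.
rewrite linearBr /= !dotvZr; nra.
Qed.

End ConvexGradient.

Section Phi.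
Variables (R : realType) (n m : nat).
Variables (f : 'rV[R]_n -> R) (g : 'I_m -> 'rV[R]_n -> R).

Lemma differentiable_grad (h : 'rV[R]_n -> R) x :
  (forall i, differentiable (partial i h) x) -> differentiable (grad h) x.
Proof.
by move=> dh; apply: differentiable_row => j; under eq_fun do rewrite mxE.
Qed.

Lemma phi_differentiable z : C2 f -> (forall i, C2 (g i)) -> differentiable (phi f g) z.
Proof.
move=> [_ [df _]] Cg.
have dx := @differentiable_lsubmx R 1 n m z.
have dy := @differentiable_rsubmx R 1 n m z.
have dgrad h : (forall i x, differentiable (partial i h) x) ->
    differentiable (fun z => grad h (lsubmx z)) z.
  by move=> dh; apply: differentiable_comp dx _; apply: differentiable_grad.
apply: differentiable_row_mx.
  apply: differentiableD; first exact: dgrad df.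
  apply: differentiable_fun_sum => i; apply: differentiable_rowZ.
    exact: differentiable_row_coord i dy.
  by apply: dgrad; case: (Cg i) => _ [].
apply: differentiableN; apply: differentiable_row => j; under eq_fun do rewrite mxE.
by apply: differentiable_comp dx _; case: (Cg j).
Qed.

Lemma phi_monotone :
  (forall x, differentiable f x) -> convex_on_nonneg f ->
  (forall i x, differentiable (g i) x) -> (forall i, convex_on_nonneg (g i)) ->
  monotone_on (@nonneg_orthant R (n + m)) (phi f g).
Proof.
move=> df cvf dg cvg u1 u2 nu1 nu2.
set x1 := lsubmx u1; set x2 := lsubmx u2; set y1 := rsubmx u1; set y2 := rsubmx u2.
have nx1 : nonneg_orthant x1 by move=> i; rewrite mxE.
have nx2 : nonneg_orthant x2 by move=> i; rewrite mxE.
have -> : dotv (u1 - u2) (phi f g u1 - phi f g u2) =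
    (dotv (x1 - x2) (1 *: grad f x1 - 1 *: grad f x2) + (1 - 1) * (f x2 - f x1)) +
    \sum_(i < m) (dotv (x1 - x2) (y1 0 i *: grad (g i) x1 - y2 0 i *: grad (g i) x2)
                  + (y1 0 i - y2 0 i) * (g i x2 - g i x1)).
  rewrite dotv_split !linearB /= /phi !(row_mxKl, row_mxKr) -/x1 -/x2 -/y1 -/y2.
  rewrite big_split /= addrA subrr mul0r addr0 !scale1r; congr (_ + _).
    by rewrite -linear_sumr -linearDr /= sumrB opprD addrACA.
  by apply: eq_bigr => i _; rewrite !mxE; ring.
apply: addr_ge0; last apply: sumr_ge0 => i _.
  exact: convex_scaled_grad_monotone.
by apply: convex_scaled_grad_monotone; rewrite ?mxE.
Qed.

End Phi.

Lemma psiE (R : realType) n m (f : 'rV[R]_n -> R) (g : 'I_m -> 'rV[R]_n -> R) :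
  psi f g = homogenize (phi f g).
Proof. by []. Qed.

Theorem lemma7 (R : realType) (n m : nat) (f : 'rV[R]_n -> R)
    (g : 'I_m -> 'rV[R]_n -> R) :
  C2 f -> convex_on_nonneg f ->
  (forall i, C2 (g i)) -> (forall i, convex_on_nonneg (g i)) ->
  (forall xh : 'rV[R]_(n + m + 1), pos_orthant xh ->
     differentiable (psi f g) xh /\
     forall d : 'rV[R]_(n + m + 1),
       0 <= (d *m 'J (psi f g) xh *m d^T) 0 0) /\
  (forall xh : 'rV[R]_(n + m + 1), pos_orthant xh ->
     {for xh, continuous (psi f g)}) /\
  (forall x1 x2 : 'rV[R]_(n + m + 1), pos_orthant x1 -> pos_orthant x2 ->
     0 <= dotv (x1 - x2) (psi f g x1 - psi f g x2)).
Proof.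
move=> Cf cvf Cg cvg.
have psi_diff xh : pos_orthant xh -> differentiable (psi f g) xh.
  move=> pxh; rewrite psiE; apply: homogenize_differentiable.
    by rewrite gt_eqF ?hom_scale_gt0.
  exact: phi_differentiable.
have psi_mono : monotone_on (@pos_orthant R (n + m + 1)) (psi f g).
  rewrite psiE; apply/homogenize_monotone/phi_monotone => //.
    by case: Cf.
  by move=> i; case: (Cg i).
split; [|split].
- move=> xh pxh; split; first exact: psi_diff.
  by move=> d; apply: monotone_jacobian_psd psi_mono (pos_orthant_nbhs pxh) (psi_diff _ pxh).
- by move=> xh pxh; apply/differentiable_continuous/psi_diff.
- exact: psi_mono.
Qed.
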